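(* Let $R$, $G$, $*$, $\sigma$ and $\mathcal{S}$ be as in the context, and suppose $\mathcal{S}$ is anticommutative. Let $x,y\in G\setminus G_*$. - (i) If $(x,y)=1$, then $c_x=c_y$ and $2(1+\sigma(xy))=0=2(\sigma(x)+\sigma(y))$. - (ii) If $(x,y)\neq 1$, then one of the following holds: - (a) $(x,y)=c_x=c_y=c_{xy}$ and $1+\sigma(x)+\sigma(y)+\sigma(xy)=0$; - (b) $(x,y)=c_x\neq c_y=c_{xy}$ and $\sigma(x)=-1$; - (c) $(x,y)=c_y\neq c_x=c_{xy}$ and $\sigma(y)=-1$; - (d) $(x,y)=c_{xy}\neq c_x=c_y$, $\sigma(xy)=-1$ and $\sigma(x)=-\sigma(y)$.
   Context: Throughout, $R$ is a commutative ring with unity with $\operatorname{char}(R)\neq 2$, and $\mathcal{U}(R)$ is its unit group. $G$ is a group with an involution $*$, i.e. a map $x\mapsto x^*$ with $(xy)^*=y^*x^*$ and $(x^* )^*=x$. The map $\sigma:G\to\mathcal{U}(R)$ is a nontrivial group homomorphism with kernel $N=\ker\sigma$, and it is compatible with $*$: $xx^*\in N$ for all $x\in G$. The group ring $RG$ carries the involution $\left(\sum_{x\in G}\alpha_x x\right)^{\sigma*}=\sum_{x\in G}\sigma(x)\alpha_x x^*$. Write $G_*=\{x\in G: x^*=x\}$ and $N_*=G_*\cap N$. Let $\mathcal{S}$ be the $R$-submodule of $RG$ spanned by the union of the following three sets: - $2\mathcal{S}_1=\{2x: x\in N_*\}$; - $\mathcal{S}_2=\{\alpha x: x\in G_*\setminus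 N,\ \alpha\in R,\ \alpha(1-\sigma(x))=0\}$; - $\mathcal{S}_3=\{x+\sigma(x)x^*: x\in G\setminus G_*\}$. $\mathcal{S}$ is called anticommutative if $ab+ba=0$ for all $a,b\in\mathcal{S}$. The commutator is $(x,y)=x^{-1}y^{-1}xy$, and for $a\in G$ we put $c_a=a^*a^{-1}$. *)

From HB Require Import structures.
From mathcomp Require Import all_boot all_order all_algebra.
From Stdlib Require Import ClassicalEpsilon.
Set Implicit Arguments. Unset Strict Implicit. Unset Printing Implicit Defensive.
Import GRing.Theory.
Local Open Scope ring_scope.

Record invGroup := InvGroup {
  gcar :> Type;
  gmul : gcar -> gcar -> gcar;
  gone : gcar;
  ginv : gcar -> gcar;
  gstar : gcar -> gcar;
  gmulA : forall x y z, gmul x (gmul y z) = gmul (gmul x y) z;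
  gmul1 : forall x, gmul gone x = x;
  gmulV : forall x, gmul (ginv x) x = gone;
  gstarM : forall x y, gstar (gmul x y) = gmul (gstar y) (gstar x);
  gstarK : forall x, gstar (gstar x) = x
}.

Section GroupRing.
Variable G : invGroup.
Variable R : comUnitRingType.

Definition geqb (x y : G) : bool :=
  if excluded_middle_informative (x = y) then true else false.

Definition gcomm (x y : G) : G :=
  gmul (gmul (gmul (ginv x) (ginv y)) x) y.

Definition cst (a : G) : G := gmul (gstar a) (ginv a).

(* Elements of the group ring RG are represented by finite formal sums
   sum_i alpha_i g_i, given as lists of pairs (alpha_i, g_i). *)
Definition RGrep := seq (R * G).

Definition coef (a : RGrep) (g : G) : R :=
  \sum_(p <- a) (if geqb p.2 g then p.1 else 0).

Definition rg_eq (a b : RGrep) : Prop := forall g, coef a g = coef b g.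

Definition rg_add (a b : RGrep) : RGrep := a ++ b.
Definition rg_scale (c : R) (a : RGrep) : RGrep := [seq (c * p.1, p.2) | p <- a].
Definition rg_mul (a b : RGrep) : RGrep :=
  [seq (p.1 * q.1, gmul p.2 q.2) | p <- a, q <- b].
Definition rg_of (g : G) : RGrep := [:: (1, g)].

Variable sigma : G -> R.

Definition in_Gstar (x : G) : Prop := gstar x = x.
Definition in_N (x : G) : Prop := sigma x = 1.

(* the generating set S_1' (= 2 S_1) U S_2 U S_3 of the R-module S *)
Definition S_gen (a : RGrep) : Prop :=
  (exists x : G, [/\ in_N x, in_Gstar x & a = [:: (2%:R, x)]])
  \/ (exists (x : G) (alpha : R),
        [/\ in_Gstar x, ~ in_N x, alpha * (1 - sigma x) = 0 & a = [:: (alpha, x)]])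
  \/ (exists x : G, ~ in_Gstar x /\ a = [:: (1, x); (sigma x, gstar x)]).

Definition in_S (a : RGrep) : Prop :=
  exists cs : seq (R * RGrep),
    (forall i, (i < size cs)%N -> S_gen (nth (0, [::]) cs i).2) /\
    rg_eq a (flatten [seq rg_scale c.1 c.2 | c <- cs]).

Definition S_anticomm : Prop :=
  forall a b, in_S a -> in_S b -> rg_eq (rg_add (rg_mul a b) (rg_mul b a)) [::].

End GroupRing.

(* Squaring the generator x + sigma(x) x^* of S shows that x^* commutes with x,
   that x^*^2 = x^2 and that 4 = 0 in R; hence c = c_x is an involution with
   x^* = x c = c x, and likewise d = c_y.  Expanding ab + ba for the generators
   a = x + sigma(x) x^* and b = y + sigma(y) y^* and factoring out yx,
   anticommutativity says that the eight group elements k, kd, kc', kc'd, 1, c,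
   d', d'c (k = (x,y), c' = c^y, d' = d^x) carry coefficients 1, sigma y,
   sigma x, sigma x sigma y, 1, sigma x, sigma y, sigma x sigma y which cancel
   at every point of G.  As the sigma values are units and 2 <> 0, only a few
   coincidence patterns among these elements allow the cancellation; evaluating
   the identity at 1, k, kd and kc' sorts them into the four alternatives.  The
   remaining patterns either contradict the identity elsewhere or make xy
   symmetric with sigma(xy) = -1, which another anticommutation relation
   forbids. *)

From mathcomp Require Import all_boot all_algebra.
From mathcomp Require Import ring.
From Stdlib Require Import ClassicalEpsilon Classical.
Set Implicit Arguments. Unset Strict Implicit.
Import GRing.Theory.
Local Open Scope ring_scope.
Local Notation "a ** b" := (gmul a b) (at level 40, left associativity).

Section GroupFacts.
Variable G : invGroup.
Implicit Types a b x y z : G.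

Lemma gmulgV x : x ** ginv x = gone G.
Proof.
rewrite -[x ** ginv x]gmul1 -{1}(gmulV (ginv x)) -gmulA (gmulA (ginv x) x) gmulV.
by rewrite gmul1 gmulV.
Qed.

Lemma gmulg1 x : x ** gone G = x.
Proof. by rewrite -(gmulV x) gmulA gmulgV gmul1. Qed.

Lemma gmulKg x y : ginv x ** (x ** y) = y.
Proof. by rewrite gmulA gmulV gmul1. Qed.

Lemma gmulVKg x y : x ** (ginv x ** y) = y.
Proof. by rewrite gmulA gmulgV gmul1. Qed.

Lemma gmulgK x y : y ** x ** ginv x = y.
Proof. by rewrite -gmulA gmulgV gmulg1. Qed.

Lemma gmulgVK x y : y ** ginv x ** x = y.
Proof. by rewrite -gmulA gmulV gmulg1. Qed.

Lemma gmulgI z x y : z ** x = z ** y -> x = y.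
Proof. by move=> h; rewrite -(gmulKg z x) h gmulKg. Qed.

Lemma gmulIg z x y : x ** z = y ** z -> x = y.
Proof. by move=> h; rewrite -(gmulgK z x) h gmulgK. Qed.

Lemma ginv_uniq x y : x ** y = gone G -> y = ginv x.
Proof. by move=> h; rewrite -(gmulKg x y) h gmulg1. Qed.

Lemma ginvM x y : ginv (x ** y) = ginv y ** ginv x.
Proof.
symmetry; apply: ginv_uniq.
by rewrite -gmulA (gmulA y) gmulgV gmul1 gmulgV.
Qed.

Lemma gmulA_eq a b z e : a ** b = e -> a ** (b ** z) = e ** z.
Proof. by move=> h; rewrite gmulA h. Qed.

Lemma gmul_fixl x y : x ** y = x -> y = gone G.
Proof. by move=> h; apply: (@gmulgI x); rewrite h gmulg1. Qed.

Lemma gmul_fixr x y : x ** y = y -> x = gone G.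
Proof. by move=> h; apply: (@gmulIg y); rewrite h gmul1. Qed.

Lemma gmul_eq1_invol x y : y ** y = gone G -> x ** y = gone G -> x = y.
Proof. by move=> h1 h2; apply: (@gmulIg y); rewrite h1 h2. Qed.

Lemma gstar1 : gstar (gone G) = gone G.
Proof.
have h := gstarM (gone G) (gone G); rewrite gmul1 in h.
by apply: (@gmulgI (gstar (gone G))); rewrite -h gmulg1.
Qed.

Lemma gstarV x : gstar (ginv x) = ginv (gstar x).
Proof. by apply: ginv_uniq; rewrite -gstarM gmulV gstar1. Qed.

Lemma conj_invol a b y : a ** y = y ** b -> a ** a = gone G -> b ** b = gone G.
Proof.
move=> hab haa; apply: (@gmul_fixl y).
by rewrite gmulA -hab -gmulA -hab gmulA haa gmul1.
Qed.

Lemma conj_neq1 a b y : a ** y = y ** b -> a <> gone G -> b <> gone G.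
Proof. by move=> hab ha hb; apply: ha; apply: (@gmul_fixr _ y); rewrite hab hb gmulg1. Qed.

Lemma cst_mul x : gstar x = cst x ** x.
Proof. by rewrite /cst gmulgVK. Qed.

Lemma cst_neq1 x : gstar x <> x -> cst x <> gone G.
Proof. by move=> hx e; apply: hx; rewrite cst_mul e gmul1. Qed.

Section NormalElement.
Variable x : G.
Hypothesis normal_x : gstar x ** x = x ** gstar x.

Lemma mul_cst : gstar x = x ** cst x.
Proof. by rewrite /cst gmulA -normal_x gmulgK. Qed.

Lemma cst_comm : x ** cst x = cst x ** x.
Proof. by rewrite -mul_cst -cst_mul. Qed.

Hypothesis star_sq : gstar x ** gstar x = x ** x.

Lemma cst_invol : cst x ** cst x = gone G.
Proof.
have := star_sq; rewrite {1}cst_mul mul_cst.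
move: (cst x) cst_comm => c cx.
by rewrite -!gmulA cx (gmulA_eq _ cx) -!gmulA gmulA; apply: gmul_fixr.
Qed.

Lemma gstar_cst : gstar (cst x) = cst x.
Proof.
rewrite {1}/cst gstarM gstarK gstarV mul_cst ginvM gmulgVK.
by symmetry; apply: ginv_uniq; rewrite cst_invol.
Qed.

End NormalElement.
End GroupFacts.

Section GroupRingFacts.
Variables (G : invGroup) (R : comUnitRingType).
Implicit Types (g h z p q u : G) (r : R).

Lemma geqbP g h : reflect (g = h) (geqb g h).
Proof. by rewrite /geqb; case: excluded_middle_informative => e; constructor. Qed.

(* [ind g h r] is the coefficient of [h] in the monomial [r g]. *)
Definition ind g h r : R := if geqb g h then r else 0.

Lemma ind_eq g r : ind g g r = r.
Proof. by rewrite /ind; case: geqbP. Qed.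

Lemma ind_ne g h r : g <> h -> ind g h r = 0.
Proof. by rewrite /ind; case: geqbP. Qed.

Lemma ind_mull z g h r : ind (z ** g) (z ** h) r = ind g h r.
Proof.
rewrite /ind; case: geqbP => [/gmulgI ->|ne]; first by case: geqbP.
by case: geqbP => // e; case: ne; rewrite e.
Qed.

Lemma ind_mull1 z h r : ind z (z ** h) r = ind (gone G) h r.
Proof. by rewrite -{1}(gmulg1 z) ind_mull. Qed.

Lemma coef_scale c (a : RGrep G R) g : coef (rg_scale c a) g = c * coef a g.
Proof.
rewrite /coef /rg_scale big_map mulr_sumr; apply: eq_bigr => p _.
by case: geqb; rewrite ?mulr0.
Qed.

Variable sigma : G -> R.
Hypothesis hanti : S_anticomm sigma.

Lemma S_gen_in_S a : S_gen sigma a -> in_S sigma a.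
Proof.
move=> h; exists [:: (1, a)]; split; first by case.
by move=> g /=; rewrite cats0 coef_scale mul1r.
Qed.

Lemma S_gen_anticomm a b :
  S_gen sigma a -> S_gen sigma b -> forall g, coef (rg_mul a b ++ rg_mul b a) g = 0.
Proof.
move=> ha hb g; have := hanti (S_gen_in_S ha) (S_gen_in_S hb) g.
by rewrite /coef big_nil.
Qed.

Lemma S3_anticomm p q g : gstar p <> p -> gstar q <> q ->
  ind (p ** q) g 1 + ind (p ** gstar q) g (sigma q) + ind (gstar p ** q) g (sigma p)
  + ind (gstar p ** gstar q) g (sigma p * sigma q)
  + ind (q ** p) g 1 + ind (q ** gstar p) g (sigma p) + ind (gstar q ** p) g (sigma q)
  + ind (gstar q ** gstar p) g (sigma q * sigma p) = 0.
Proof.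
move=> hp hq.
have gp : S_gen sigma [:: (1, p); (sigma p, gstar p)] by right; right; exists p.
have gq : S_gen sigma [:: (1, q); (sigma q, gstar q)] by right; right; exists q.
have := S_gen_anticomm gp gq g.
by rewrite /rg_mul /= /coef !big_cons big_nil /= !mul1r !mulr1 /ind addr0 !addrA.
Qed.

Lemma S3_S2_anticomm p u g :
  gstar p <> p -> gstar u = u -> sigma u <> 1 -> 2%:R * (1 - sigma u) = 0 ->
  ind (p ** u) g 2%:R + ind (gstar p ** u) g (sigma p * 2%:R)
  + ind (u ** p) g 2%:R + ind (u ** gstar p) g (2%:R * sigma p) = 0.
Proof.
move=> hp hu hN h2.
have gp : S_gen sigma [:: (1, p); (sigma p, gstar p)] by right; right; exists p.
have gu : S_gen sigma [:: (2%:R, u)] by right; left; exists u, 2%:R.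
have := S_gen_anticomm gp gu g.
by rewrite /rg_mul /= /coef !big_cons big_nil /= !mul1r !mulr1 /ind addr0 !addrA.
Qed.

Hypotheses (two_neq0 : (2%:R : R) <> 0) (sigma_unit : forall g, sigma g \is a GRing.unit).

Lemma sigma_neq0 g : sigma g <> 0.
Proof. by move=> h; apply: two_neq0; apply: (mulIr (sigma_unit g)); rewrite h !mulr0. Qed.

Lemma one_neq0 : (1 : R) <> 0.
Proof. exact/eqP/oner_neq0. Qed.

Lemma two_sigma_neq0 g : 2%:R * sigma g <> 0.
Proof. by move=> h; apply: two_neq0; apply: (mulIr (sigma_unit g)); rewrite h mul0r. Qed.

(* The coefficients of x x^* and x^2 in the square of x + sigma(x) x^* must vanish. *)
Lemma S3_square p : gstar p <> p ->
  [/\ gstar p ** p = p ** gstar p, gstar p ** gstar p = p ** p & (4%:R : R) = 0].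
Proof.
move=> hp; have h g := S3_anticomm g hp hp.
have n1 : p ** p <> p ** gstar p by move/gmulgI => e; apply: hp; rewrite -e.
have n2 : gstar p ** gstar p <> p ** gstar p by move/gmulIg.
have n3 : gstar p ** p <> p ** p by move/gmulIg.
have n4 : p ** gstar p <> p ** p by move/gmulgI.
have hpp := h (p ** gstar p).
rewrite (ind_ne _ n1) (ind_ne _ n2) ind_eq in hpp.
case: (classic (gstar p ** p = p ** gstar p)) => e; last first.
  rewrite (ind_ne _ e) in hpp; case: (two_sigma_neq0 (g := p)); rewrite -hpp; ring.
rewrite e ind_eq in hpp.
have four0 : (4%:R : R) = 0.
  by apply: (mulIr (sigma_unit p)); rewrite mul0r -hpp; ring.
split => //; have hq := h (p ** p).
rewrite ind_eq (ind_ne _ n3) (ind_ne _ n4) in hq.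
case: (classic (gstar p ** gstar p = p ** p)) => // e2.
by rewrite (ind_ne _ e2) in hq; case: two_neq0; rewrite -hq; ring.
Qed.

End GroupRingFacts.

Lemma add1r_eq0 (R : comUnitRingType) (r : R) : 1 + r = 0 -> r = -1.
Proof. by move=> h; rewrite -(addKr 1 r) h addr0. Qed.

Section Commutator.
Variables (G : invGroup) (R : comUnitRingType) (sigma : G -> R).
Hypotheses (two_neq0 : (2%:R : R) <> 0)
  (sigma_unit : forall g, sigma g \is a GRing.unit)
  (sigmaM : forall g h, sigma (g ** h) = sigma g * sigma h)
  (hanti : S_anticomm sigma).

Variables x y c d c' d' k : G.
Hypotheses (hx : gstar x <> x) (hy : gstar y <> y)
  (Hc : cst x = c) (Hd : cst y = d) (Hc' : c ** y = y ** c') (Hd' : d ** x = x ** d')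
  (Hk : gcomm x y = k).

Let square_x := S3_square hanti two_neq0 sigma_unit hx.
Let square_y := S3_square hanti two_neq0 sigma_unit hy.
Let sigma_nz g : sigma g <> 0 := sigma_neq0 two_neq0 sigma_unit (g := g).
Let two_sigma_nz g : 2%:R * sigma g <> 0 := two_sigma_neq0 two_neq0 sigma_unit (g := g).

Lemma four_eq0 : (4%:R : R) = 0.
Proof. by case: square_x. Qed.

Lemma starx : gstar x = x ** c.
Proof. by rewrite -Hc; case: square_x => nx _ _; exact: mul_cst. Qed.

Lemma stary : gstar y = y ** d.
Proof. by rewrite -Hd; case: square_y => ny _ _; exact: mul_cst. Qed.

Lemma xc_comm : x ** c = c ** x.
Proof. by rewrite -starx -Hc cst_mul. Qed.

Lemma yd_comm : y ** d = d ** y.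
Proof. by rewrite -stary -Hd cst_mul. Qed.

Lemma c_invol : c ** c = gone G.
Proof. by rewrite -Hc; case: square_x => nx sx _; exact: cst_invol nx sx. Qed.

Lemma d_invol : d ** d = gone G.
Proof. by rewrite -Hd; case: square_y => ny sy _; exact: cst_invol ny sy. Qed.

Lemma gstar_c : gstar c = c.
Proof. by rewrite -Hc; case: square_x => nx sx _; exact: gstar_cst nx sx. Qed.

Lemma c_neq1 : c <> gone G. Proof. by rewrite -Hc; exact: cst_neq1. Qed.
Lemma d_neq1 : d <> gone G. Proof. by rewrite -Hd; exact: cst_neq1. Qed.
Lemma c'_invol : c' ** c' = gone G. Proof. exact: conj_invol Hc' c_invol. Qed.
Lemma c'_neq1 : c' <> gone G. Proof. exact: conj_neq1 Hc' c_neq1. Qed.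
Lemma d'_neq1 : d' <> gone G. Proof. exact: conj_neq1 Hd' d_neq1. Qed.

Lemma mulxyA : x ** y = y ** (x ** k).
Proof. by rewrite -Hk /gcomm -!gmulA !gmulVKg. Qed.

Lemma mulxy : x ** y = y ** x ** k.
Proof. by rewrite mulxyA gmulA. Qed.

(* Anticommutativity of x + sigma(x) x^* and y + sigma(y) y^*, translated by (yx)^-1. *)
Lemma anticomm_xy w :
  ind k w 1 + ind (k ** d) w (sigma y) + ind (k ** c') w (sigma x)
  + ind (k ** c' ** d) w (sigma x * sigma y) + ind (gone G) w 1 + ind c w (sigma x)
  + ind d' w (sigma y) + ind (d' ** c) w (sigma y * sigma x) = 0.
Proof.
have := S3_anticomm hanti (y ** x ** w) hx hy.
have E2 : x ** gstar y = y ** x ** (k ** d) by rewrite stary gmulA mulxy -!gmulA.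
have E3 : gstar x ** y = y ** x ** (k ** c').
  by rewrite starx -gmulA Hc' gmulA mulxy -!gmulA.
have E4 : gstar x ** gstar y = y ** x ** (k ** c' ** d).
  by rewrite starx stary -!gmulA (gmulA_eq _ Hc') -!gmulA (gmulA_eq _ mulxy) -!gmulA.
have E6 : y ** gstar x = y ** x ** c by rewrite starx gmulA.
have E7 : gstar y ** x = y ** x ** d' by rewrite stary -gmulA Hd' gmulA.
have E8 : gstar y ** gstar x = y ** x ** (d' ** c).
  by rewrite stary starx -!gmulA (gmulA_eq _ Hd') -!gmulA.
by rewrite mulxy E2 E3 E4 E6 E7 E8 ind_mull1 !ind_mull.
Qed.

Lemma star_xy : gstar (x ** y) = y ** x ** (d' ** c).
Proof. by rewrite gstarM stary starx -!gmulA (gmulA_eq _ Hd') -!gmulA. Qed.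

Lemma cst_xy : cst (x ** y) = y ** x ** (d' ** c) ** ginv k ** ginv (y ** x).
Proof. by rewrite /cst star_xy mulxy ginvM !gmulA. Qed.

Lemma c'_eq_d : c' = d -> c = d.
Proof. by move=> e; apply: (@gmulIg _ y); rewrite Hc' e yd_comm. Qed.

Lemma d'_eq_c : d' = c -> c = d.
Proof. by move=> e; apply: (@gmulIg _ x); rewrite Hd' e xc_comm. Qed.

Lemma c_eq_d_conj : c = d -> c' = c /\ d' = c.
Proof.
move=> e; split; first by apply: (@gmulgI _ y); rewrite -Hc' e yd_comm.
by apply: (@gmulgI _ x); rewrite -Hd' -e xc_comm.
Qed.

Lemma cd_comm : c' = c -> c ** d = d ** c.
Proof.
move=> e; have h := gstarM c y; rewrite Hc' gstarM e gstar_c stary in h.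
by move: h; rewrite gmulA Hc' e -!gmulA => /gmulgI.
Qed.

Lemma cst_xy_of_k_c : k = c -> cst (x ** y) = d.
Proof.
move=> kc; rewrite cst_xy kc ginvM -!gmulA gmulVKg (gmulA_eq _ (esym Hd')).
by rewrite -!gmulA gmulVKg (gmulA_eq _ yd_comm) -!gmulA gmulgV gmulg1.
Qed.

(* If xy were symmetric with sigma(xy) = -1, then 2xy would be a generator of type S_2
   (as 4 = 0), and it does not anticommute with x + sigma(x) x^*. *)
Lemma xy_not_symmetric : gstar (x ** y) = x ** y -> sigma x * sigma y = -1 ->
  k <> gone G -> k <> c -> False.
Proof.
move=> hu hs k1 kc.
have hN : sigma (x ** y) <> 1.
  rewrite sigmaM hs => e; apply: two_neq0.
  have -> : (2%:R : R) = 1 - (-1) by ring.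
  by rewrite e subrr.
have h2 : 2%:R * (1 - sigma (x ** y)) = 0 by rewrite sigmaM hs -four_eq0; ring.
have := S3_S2_anticomm hanti (x ** (x ** y)) hx hu hN h2.
have n1 : gstar x ** (x ** y) <> x ** (x ** y) by move/gmulIg.
have n2 : x ** y ** x <> x ** (x ** y).
  rewrite -gmulA => /gmulgI; rewrite mulxyA => /gmulgI e.
  by apply: k1; apply: (@gmul_fixl _ x); rewrite -e.
have n3 : x ** y ** gstar x <> x ** (x ** y).
  by rewrite starx -!gmulA => /gmulgI; rewrite mulxyA => /gmulgI /gmulgI /esym.
by rewrite !ind_eq !(ind_ne _ n1) !(ind_ne _ n2) !(ind_ne _ n3) !addr0.
Qed.

Lemma commuting_case : k = gone G ->
  c = d /\ 2%:R * (1 + sigma x * sigma y) = 0 /\ 2%:R * (sigma x + sigma y) = 0.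
Proof.
move=> k1.
have cd : c = d.
  apply: NNPP => cnd; have := anticomm_xy (gone G).
  have n1 : c' ** d <> gone G by move/(gmul_eq1_invol d_invol)/c'_eq_d.
  have n2 : d' ** c <> gone G by move/(gmul_eq1_invol c_invol)/d'_eq_c.
  rewrite k1 !gmul1 !ind_eq (ind_ne _ d_neq1) (ind_ne _ c'_neq1) (ind_ne _ c_neq1).
  rewrite (ind_ne _ d'_neq1) (ind_ne _ n1) (ind_ne _ n2) => h.
  by apply: two_neq0; rewrite -h; ring.
have [c'c d'c] := c_eq_d_conj cd; have n1c : gone G <> c by move/esym/c_neq1.
have h1 := anticomm_xy (gone G); have h2 := anticomm_xy c.
rewrite k1 -cd c'c d'c !gmul1 c_invol !ind_eq !(ind_ne _ c_neq1) in h1.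
rewrite k1 -cd c'c d'c !gmul1 c_invol !ind_eq !(ind_ne _ n1c) in h2.
by split => //; split; [rewrite -h1 | rewrite -h2]; ring.
Qed.

Lemma case_k_eq_c_eq_d : c = d -> k = c ->
  [/\ k = c, c = d, d = cst (x ** y) & 1 + sigma x + sigma y + sigma x * sigma y = 0].
Proof.
move=> cd kc; split => //; first by rewrite cst_xy_of_k_c.
have [c'c d'c] := c_eq_d_conj cd; have h1 := anticomm_xy (gone G).
rewrite kc -cd c'c d'c c_invol !gmul1 !ind_eq !(ind_ne _ c_neq1) in h1.
by rewrite -h1; ring.
Qed.

Lemma cst_xy_of_c_eq_d : c = d -> k <> gone G -> cst (x ** y) = k.
Proof.
move=> cd k1; have [_ d'c] := c_eq_d_conj cd.
have hu : gstar (x ** y) <> x ** y.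
  by rewrite star_xy mulxy d'c c_invol gmulg1 => /esym /gmul_fixl.
have [hu1 hu2 _] := S3_square hanti two_neq0 sigma_unit hu.
rewrite star_xy d'c c_invol gmulg1 mulxy in hu1 hu2.
move: hu1 hu2; rewrite cst_xy d'c c_invol gmulg1; move: (y ** x) => e hu1 hu2.
have ek : e ** k = k ** e by move: hu1; rewrite -[e ** k ** e]gmulA => /gmulgI.
have kk : k ** k = gone G.
  apply: (@gmul_fixl _ (e ** e)).
  by rewrite {2}hu2 -!gmulA (gmulA_eq _ (esym ek)) -!gmulA.
have -> : ginv k = k by symmetry; apply: ginv_uniq.
by rewrite ek gmulgK.
Qed.

Lemma case_c_eq_d : c = d -> k <> gone G -> k <> c ->
  [/\ k = cst (x ** y), cst (x ** y) <> c, c = d,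
      sigma x * sigma y = -1 & sigma x = - sigma y].
Proof.
move=> cd k1 nkc; have [c'c d'c] := c_eq_d_conj cd.
rewrite cst_xy_of_c_eq_d //; split => //.
- have h1 := anticomm_xy (gone G).
  have n1 : k ** c <> gone G by move/(gmul_eq1_invol c_invol).
  rewrite -cd c'c d'c -gmulA c_invol gmulg1 !ind_eq !(ind_ne _ k1) !(ind_ne _ n1) in h1.
  by rewrite !(ind_ne _ c_neq1) in h1; apply: add1r_eq0; rewrite -h1; ring.
- have h2 := anticomm_xy c; have n1c : gone G <> c by move/esym/c_neq1.
  have n1 : k ** c <> c by move/gmul_fixr.
  rewrite -cd c'c d'c -gmulA c_invol gmulg1 !ind_eq !(ind_ne _ nkc) !(ind_ne _ n1) in h2.
  by rewrite !(ind_ne _ n1c) in h2; rewrite -(subr0 (sigma x)) -h2; ring.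
Qed.

Section DistinctInvolutions.
Hypotheses (cnd : c <> d) (k1 : k <> gone G).

Lemma anticomm_xy_at1 :
  ind (k ** d) (gone G) (sigma y) + ind (k ** c') (gone G) (sigma x)
  + ind (k ** c' ** d) (gone G) (sigma x * sigma y) + 1 = 0.
Proof.
have := anticomm_xy (gone G).
have nd'c1 : d' ** c <> gone G by move/(gmul_eq1_invol c_invol)/d'_eq_c.
rewrite (ind_ne _ k1) (ind_ne _ c_neq1) (ind_ne _ d'_neq1) (ind_ne _ nd'c1) ind_eq => h.
by rewrite -h; ring.
Qed.

Lemma sigma_y_of_k_eq_d : k = d -> sigma y = -1.
Proof.
move=> kd; have := anticomm_xy_at1.
have n1 : d ** c' <> gone G by move/(gmul_eq1_invol c'_invol)/esym/c'_eq_d.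
have n2 : d ** c' ** d <> gone G by move/(gmul_eq1_invol d_invol)/gmul_fixl/c'_neq1.
rewrite kd d_invol ind_eq (ind_ne _ n1) (ind_ne _ n2) => h.
by apply: add1r_eq0; rewrite -h; ring.
Qed.

Lemma d'_eq_d_of_k_eq_d : k = d -> d' = d.
Proof.
move=> kd; apply: NNPP => nd'd; have := anticomm_xy k.
have n1d : gone G <> d by move/esym/d_neq1.
have n3 : d ** c' <> d by move/gmul_fixl/c'_neq1.
have n4 : d ** c' ** d <> d by move/gmul_fixr/(gmul_eq1_invol c'_invol)/esym/c'_eq_d.
rewrite kd d_invol !ind_eq !(ind_ne _ n1d) (ind_ne _ n3) (ind_ne _ n4) (ind_ne _ cnd).
rewrite (ind_ne _ nd'd).
case: (classic (d' ** c = d)) => [e|ne1]; last first.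
  by rewrite (ind_ne _ ne1) => h; case: (@one_neq0 R); rewrite -h; ring.
rewrite e ind_eq => h; apply: xy_not_symmetric k1 _ => //.
- by rewrite star_xy e -kd -mulxy.
- by rewrite mulrC; apply: add1r_eq0; rewrite -h; ring.
- by rewrite kd => /esym.
Qed.

Lemma c'_eq_c_of_k_eq_d : k = d -> c' = c.
Proof.
move=> kd; apply: NNPP => nc'c; have := anticomm_xy (k ** c').
rewrite kd (d'_eq_d_of_k_eq_d kd) d_invol !ind_mull !ind_eq.
have n6 : d <> d ** c' by move/esym/gmul_fixl/c'_neq1.
have n7 : d ** c' ** d <> d ** c' by move/gmul_fixl/d_neq1.
have n8 : gone G <> d ** c' by move/esym/(gmul_eq1_invol c'_invol)/esym/c'_eq_d.
have ncc' : c <> c' by move/esym.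
rewrite !(ind_ne _ n6) (ind_ne _ n7) !(ind_ne _ n8) !(ind_ne _ ncc').
case: (classic (c = d ** c')) => [e|ne1] h.
  by rewrite e ind_eq in h; case: (@two_sigma_nz x); rewrite -h; ring.
by rewrite (ind_ne _ ne1) in h; case: (@sigma_nz x); rewrite -h; ring.
Qed.

Lemma case_k_eq_d : k = d ->
  [/\ k = d, d <> c, c = cst (x ** y) & sigma y = -1].
Proof.
move=> kd; split; [done | by move/esym | | exact: sigma_y_of_k_eq_d].
have c'c := c'_eq_c_of_k_eq_d kd.
have yc : y ** c = c ** y by rewrite Hc' c'c.
rewrite cst_xy kd (d'_eq_d_of_k_eq_d kd) -(cd_comm c'c) gmulA gmulgK ginvM.
by rewrite -!gmulA (gmulA_eq _ xc_comm) -!gmulA gmulVKg (gmulA_eq _ yc) gmulgK.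
Qed.

Lemma sigma_x_of_k_eq_c' : k <> d -> k = c' -> sigma x = -1.
Proof.
move=> nkd kc'; have := anticomm_xy_at1.
have n1 : k ** d <> gone G by move/(gmul_eq1_invol d_invol).
rewrite (ind_ne _ n1) {1 2}kc' c'_invol gmul1 ind_eq (ind_ne _ d_neq1) => h.
by apply: add1r_eq0; rewrite -h; ring.
Qed.

Lemma anticomm_xy_at_c' : k = c' -> c' <> c ->
  1 + ind d' c' (sigma y) + ind (d' ** c) c' (sigma y * sigma x) = 0.
Proof.
move=> kc' nc'c; have := anticomm_xy k.
have m1 : c' ** d <> c' by move/gmul_fixl/d_neq1.
have m2 : gone G <> c' by move/esym/c'_neq1.
have m3 : d <> c' by move/esym/c'_eq_d.
rewrite kc' c'_invol gmul1 ind_eq (ind_ne _ m1) !(ind_ne _ m2) (ind_ne _ m3).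
by rewrite (ind_ne _ (nesym nc'c)) => h; rewrite -h; ring.
Qed.

Lemma d'_neq_c'_of_k_eq_c' : k <> d -> k = c' -> c' <> c -> c' <> d'.
Proof.
move=> nkd kc' nc'c e2; have sx := sigma_x_of_k_eq_c' nkd kc'.
have m4 : c' ** c <> c' by move/gmul_fixl/c_neq1.
have := anticomm_xy_at_c' kc' nc'c; rewrite -e2 ind_eq (ind_ne _ m4) addr0 => h.
have sy : sigma y = -1 by apply: add1r_eq0.
have := anticomm_xy (k ** d).
have m5 : c' <> c' ** d by move/esym/gmul_fixl/d_neq1.
have m6 : gone G <> c' ** d by move/esym/(gmul_eq1_invol d_invol)/c'_eq_d.
have m7 : d <> c' ** d by move/esym/gmul_fixr/c'_neq1.
rewrite kc' -e2 c'_invol gmul1 !ind_mull !ind_eq !(ind_ne _ m5) !(ind_ne _ m6).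
rewrite (ind_ne _ m7) (ind_ne _ cnd).
case: (classic (c = c' ** d)) => [e3|ne3] h3.
  by rewrite e3 ind_eq sx sy in h3; apply: two_neq0; rewrite -oppr0 -h3; ring.
rewrite (ind_ne _ ne3) in h3; case: (@sigma_nz y).
by rewrite -h3; ring.
Qed.

Lemma c_eq_c'_of_k_eq_c' : k <> d -> k = c' -> c = c'.
Proof.
move=> nkd kc'; apply: NNPP => ncc'; have nc'c := nesym ncc'.
have := anticomm_xy_at_c' kc' nc'c.
rewrite (ind_ne _ (nesym (d'_neq_c'_of_k_eq_c' nkd kc' nc'c))).
case: (classic (d' ** c = c')) => [e3|ne3]; last first.
  by rewrite (ind_ne _ ne3) => h; case: (@one_neq0 R); rewrite -h; ring.
rewrite e3 ind_eq => h; apply: xy_not_symmetric k1 _ => //.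
- by rewrite star_xy e3 -kc' -mulxy.
- by rewrite mulrC; apply: add1r_eq0; rewrite -h; ring.
- by rewrite kc'.
Qed.

Lemma case_k_eq_c' : k <> d -> k = c' ->
  [/\ k = c, c <> d, d = cst (x ** y) & sigma x = -1].
Proof.
move=> nkd kc'; have kc : k = c by rewrite kc' -c_eq_c'_of_k_eq_c'.
by split => //; [rewrite cst_xy_of_k_c | exact: sigma_x_of_k_eq_c'].
Qed.

Section GenericCommutator.
Hypotheses (nkd : k <> d) (nkc' : k <> c').

Lemma generic_kc'd : k ** c' ** d = gone G /\ sigma x * sigma y = -1.
Proof.
have := anticomm_xy_at1.
have n1 : k ** d <> gone G by move/(gmul_eq1_invol d_invol).
have n2 : k ** c' <> gone G by move/(gmul_eq1_invol c'_invol).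
rewrite (ind_ne _ n1) (ind_ne _ n2).
case: (classic (k ** c' ** d = gone G)) => [e|ne1]; last first.
  by rewrite (ind_ne _ ne1) => h; case: (@one_neq0 R); rewrite -h; ring.
by rewrite e ind_eq => h; split => //; apply: add1r_eq0; rewrite -h; ring.
Qed.

Lemma anticomm_xy_at_k :
  1 + ind c k (sigma x) + ind d' k (sigma y) + ind (d' ** c) k (sigma y * sigma x) = 0.
Proof.
have := anticomm_xy k; have [e _] := generic_kc'd.
have m1 : k ** d <> k by move/gmul_fixl/d_neq1.
have m2 : k ** c' <> k by move/gmul_fixl/c'_neq1.
have m3 : gone G <> k by move/esym/k1.
rewrite e ind_eq (ind_ne _ m1) (ind_ne _ m2) !(ind_ne _ m3) => h.
by rewrite -h; ring.
Qed.

Lemma d'_eq_k_shape : c <> k -> d' = k ->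
  [/\ sigma y = -1, sigma x = 1, c = k ** d & c' = c].
Proof.
move=> nck e2; have [e hab] := generic_kc'd.
have := anticomm_xy_at_k; have m6 : k ** c <> k by move/gmul_fixl/c_neq1.
rewrite (ind_ne _ nck) e2 ind_eq (ind_ne _ m6) => h.
have sy : sigma y = -1 by apply: add1r_eq0; rewrite -h; ring.
have sx : sigma x = 1 by rewrite sy mulrN1 in hab; rewrite -[sigma x]opprK hab opprK.
have nc'd : c' <> d by move/c'_eq_d.
have ckd : c = k ** d.
  apply: NNPP => nckd; have := anticomm_xy (k ** d).
  have p1 : k <> k ** d by move/esym/gmul_fixl/d_neq1.
  have p2 : gone G <> k ** d by move/esym/(gmul_eq1_invol d_invol).
  rewrite e e2 !ind_mull !ind_eq !(ind_ne _ p1) (ind_ne _ nc'd) !(ind_ne _ p2).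
  rewrite (ind_ne _ cnd) (ind_ne _ nckd) => h3.
  by case: (@sigma_nz y); rewrite -h3; ring.
split => //; apply: NNPP => nc'c; have := anticomm_xy (k ** c').
have q1 : k <> k ** c' by move/esym/gmul_fixl/c'_neq1.
have q2 : gone G <> k ** c' by move/esym/(gmul_eq1_invol c'_invol).
have ndc' : d <> c' by move/esym.
rewrite e e2 ckd !ind_mull !ind_eq !(ind_ne _ q1) !(ind_ne _ q2) !(ind_ne _ ndc').
rewrite -ckd (ind_ne _ (nesym nc'c)) => h4.
by case: (@sigma_nz x); rewrite -h4; ring.
Qed.

(* With sigma(x) = 1, sigma(y) = -1 and c = kd, the element xy fails anticommutativity
   with y at the coefficient of y(xy). *)
Lemma d'_neq_k : c <> k -> d' <> k.
Proof.
move=> nck e2; have [sy sx ckd c'c] := d'_eq_k_shape nck e2.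
have kcd : k = c ** d by rewrite ckd -gmulA d_invol gmulg1.
have yc : y ** c = c ** y by rewrite Hc' c'c.
have ky : k ** y = y ** k.
  by rewrite kcd -gmulA -yd_comm gmulA -yc -gmulA.
have kc_d : k ** c = d by rewrite kcd (cd_comm c'c) -gmulA c_invol gmulg1.
have hu : gstar (x ** y) <> x ** y.
  by rewrite star_xy mulxy e2 => /gmulgI /gmul_fixl /c_neq1.
have := S3_anticomm hanti (y ** (x ** y)) hy hu.
have r1 : y ** gstar (x ** y) <> y ** (x ** y) by move/gmulgI.
have r2 : gstar y ** (x ** y) <> y ** (x ** y) by move/gmulIg.
have r3 : gstar y ** gstar (x ** y) <> y ** (x ** y).
  rewrite star_xy e2 kc_d stary mulxy -!gmulA => /gmulgI.
  rewrite (gmulA_eq _ (esym yd_comm)) -!gmulA => /gmulgI.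
  by rewrite (gmulA_eq _ Hd') -!gmulA => /gmulgI; rewrite e2 => /gmul_fixl /d_neq1.
have r4 : x ** y ** y <> y ** (x ** y).
  by rewrite gmulA => /gmulIg; rewrite mulxy => /gmul_fixl.
have r5 : x ** y ** gstar y <> y ** (x ** y).
  rewrite stary mulxy -!gmulA => /gmulgI.
  rewrite (gmulA_eq _ ky) -!gmulA -ckd (gmulA_eq _ mulxyA) -!gmulA.
  by move=> /gmulgI /gmulgI /gmul_fixl /c_neq1.
have r6 : gstar (x ** y) ** y <> y ** (x ** y).
  rewrite star_xy e2 -!gmulA => /gmulgI /gmulgI.
  by rewrite gmulA => /gmul_fixr /(gmul_eq1_invol c_invol) /esym.
rewrite !ind_eq (ind_ne _ r1) (ind_ne _ r2) (ind_ne _ r3) (ind_ne _ r4) (ind_ne _ r5).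
rewrite (ind_ne _ r6) sigmaM sx sy.
case: (classic (gstar (x ** y) ** gstar y = y ** (x ** y))) => [e5|ne5].
  by rewrite e5 ind_eq => h; apply: two_neq0; rewrite -h; ring.
by rewrite (ind_ne _ ne5) => h; case: (@one_neq0 R); rewrite -h; ring.
Qed.

Lemma generic_k_eq_c : k = c.
Proof.
apply: NNPP => nkc; have nck := nesym nkc; have [_ hab] := generic_kc'd.
have := anticomm_xy_at_k; rewrite (ind_ne _ nck) (ind_ne _ (d'_neq_k nck)).
case: (classic (d' ** c = k)) => [e3|ne3]; last first.
  by rewrite (ind_ne _ ne3) => h; case: (@one_neq0 R); rewrite -h; ring.
move=> _; apply: (xy_not_symmetric _ hab k1 nkc).
by rewrite star_xy e3 -mulxy.
Qed.

Lemma case_generic : [/\ k = c, c <> d, d = cst (x ** y) & sigma x = -1].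
Proof.
have kc := generic_k_eq_c; split => //; first by rewrite cst_xy_of_k_c.
have := anticomm_xy_at_k; rewrite -kc ind_eq.
have nd'k : d' <> k by rewrite kc => /d'_eq_c.
have m5 : d' ** k <> k by move/gmul_fixr/d'_neq1.
by rewrite (ind_ne _ nd'k) (ind_ne _ m5) => h; apply: add1r_eq0; rewrite -h; ring.
Qed.

End GenericCommutator.
End DistinctInvolutions.

Lemma commutator_classification :
  (k = gone G ->
     c = d /\ 2%:R * (1 + sigma x * sigma y) = 0 /\ 2%:R * (sigma x + sigma y) = 0)
  /\
  (k <> gone G ->
     [/\ k = c, c = d, d = cst (x ** y) & 1 + sigma x + sigma y + sigma x * sigma y = 0]
     \/ [/\ k = c, c <> d, d = cst (x ** y) & sigma x = -1]
     \/ [/\ k = d, d <> c, c = cst (x ** y) & sigma y = -1]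
     \/ [/\ k = cst (x ** y), cst (x ** y) <> c, c = d,
            sigma x * sigma y = -1 & sigma x = - sigma y]).
Proof.
split=> [|k1]; first exact: commuting_case.
have [cd|cnd] := classic (c = d).
  have [kc|nkc] := classic (k = c); first by left; exact: case_k_eq_c_eq_d.
  by right; right; right; exact: case_c_eq_d.
have [kd|nkd] := classic (k = d); first by right; right; left; exact: case_k_eq_d.
have [kc'|nkc'] := classic (k = c'); first by right; left; exact: case_k_eq_c'.
by right; left; exact: case_generic.
Qed.

End Commutator.

Unset Implicit Arguments.

Theorem lemma3p13 (G : invGroup) (R : comUnitRingType) (sigma : G -> R)
  (hchar : (2%:R : R) != 0)
  (hunit : forall x : G, sigma x \is a GRing.unit)
  (hmorph : forall x y : G, sigma (gmul x y) = sigma x * sigma y)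
  (hnontriv : exists x : G, sigma x != 1)
  (hcompat : forall x : G, sigma (gmul x (gstar x)) = 1)
  (hanti : S_anticomm sigma)
  (x y : G) (hx : gstar x <> x) (hy : gstar y <> y) :
  (gcomm x y = gone G ->
     cst x = cst y /\
     2%:R * (1 + sigma (gmul x y)) = 0 /\
     2%:R * (sigma x + sigma y) = 0)
  /\
  (gcomm x y <> gone G ->
     [/\ gcomm x y = cst x, cst x = cst y, cst y = cst (gmul x y)
       & 1 + sigma x + sigma y + sigma (gmul x y) = 0]
     \/ [/\ gcomm x y = cst x, cst x <> cst y, cst y = cst (gmul x y)
          & sigma x = -1]
     \/ [/\ gcomm x y = cst y, cst y <> cst x, cst x = cst (gmul x y)
          & sigma y = -1]
     \/ [/\ gcomm x y = cst (gmul x y), cst (gmul x y) <> cst x, cst x = cst y,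
            sigma (gmul x y) = -1 & sigma x = - sigma y]).
Proof.
have two_neq0 : (2%:R : R) <> 0 by apply/eqP.
have Hc' : cst x ** y = y ** (ginv y ** cst x ** y) by rewrite -!gmulA gmulVKg.
have Hd' : cst y ** x = x ** (ginv x ** cst y ** x) by rewrite -!gmulA gmulVKg.
rewrite hmorph.
exact: (commutator_classification two_neq0 hunit hmorph hanti hx hy erefl erefl Hc' Hd' erefl).
Qed.
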